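(* There is an absolute constant $C>0$ such that the following holds. Let $p\ge3$, $\mu>0$, $b,y\in\mathbb{R}^n$, and define $h:\mathbb{R}^n\to\mathbb{R}$ by $h(x)=\sum_{i=1}^n|x_i-b_i|^p+\mu\|x-y\|_2^2$. Then for every $x$ at which $h$ is thrice differentiable (all $x$ if $p>3$; all $x$ with $x_i\ne b_i$ for every $i$ if $p=3$) and all $u,w\in\mathbb{R}^n$, $$|\nabla^3 h(x)[u,u,w]|\le C\,p\,\mu^{-1/(p-2)}\,\|w\|_2\,u^\top\nabla^2 h(x)u.$$ *)

From Stdlib Require Import Reals Lra.
Open Scope R_scope.

(* Vectors of R^n are represented as functions nat -> R; only the
   coordinates 0..n-1 are relevant. *)
Fixpoint rsum (n : nat) (f : nat -> R) : R :=
  match n with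
  | O => 0
  | S m => rsum m f + f m
  end.

Definition norm2 (n : nat) (w : nat -> R) : R := sqrt (rsum n (fun i => w i ^ 2)).

(* a^p for a >= 0 and real p > 0, with the convention 0^p = 0. *)
Definition rpow (a p : R) : R := if Rle_dec a 0 then 0 else Rpower a p.

Definition hfun (n : nat) (p mu : R) (b y : nat -> R) (x : nat -> R) : R :=
  rsum n (fun i => rpow (Rabs (x i - b i)) p) + mu * rsum n (fun i => (x i - y i) ^ 2).

Definition vadd_s (x : nat -> R) (t : R) (v : nat -> R) : nat -> R :=
  fun i => x i + t * v i.

(* second_dir f x u l : l is the second directional derivative
   d^2/ds^2 f(x + s u) at s = 0, i.e. l = D^2 f(x)[u,u]. *)
Definition second_dir (f : (nat -> R) -> R) (x u : nat -> R) (l : R) : Prop :=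
  exists d1 : R -> R,
    (exists eps, 0 < eps /\ forall s, Rabs s < eps ->
        derivable_pt_lim (fun r => f (vadd_s x r u)) s (d1 s)) /\
    derivable_pt_lim d1 0 l.

(* third_dir f x u w l : l = d/dt [ D^2 f(x + t w)[u,u] ] at t = 0,
   i.e. l = D^3 f(x)[u,u,w]. *)
Definition third_dir (f : (nat -> R) -> R) (x u w : nat -> R) (l : R) : Prop :=
  exists g : R -> R,
    (exists eps, 0 < eps /\ forall t, Rabs t < eps -> second_dir f (vadd_s x t w) u (g t)) /\
    derivable_pt_lim g 0 l.

(* With t_i = x_i - b_i everything is separable:
   D^3 h(x)[u,u,w] = sum_i p(p-1)(p-2) sgn(t_i) |t_i|^(p-3) w_i u_i^2 and
   D^2 h(x)[u,u] = sum_i (p(p-1) |t_i|^(p-2) + 2 mu) u_i^2.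
   Bounding |w_i| by ||w||_2, it remains to compare the coefficients in one
   variable r = |t_i|, at the scale m = mu^(1/(p-2)).  If r >= m/3 then
   (p-1)(p-2) r^(p-3) <= (3/m) p(p-1) r^(p-2); if r <= m/3 then, since
   (k+1)(k+2) <= 4 * 3^k, (p-1)(p-2) r^(p-3) <= 4 m^(p-3) = 4 mu / m.
   Hence the constant C = 3 works. *)

From Stdlib Require Import Reals Lra Lia.
Open Scope R_scope.

Lemma Rpower_pos a q : 0 < Rpower a q.
Proof. exact (exp_pos _). Qed.

Lemma derivable_pt_lim_eq_deriv f x l l' :
  derivable_pt_lim f x l -> l = l' -> derivable_pt_lim f x l'.
Proof. now intros H <-. Qed.

Lemma derivable_pt_lim_add f g x a c :
  derivable_pt_lim f x a -> derivable_pt_lim g x c ->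
  derivable_pt_lim (fun t => f t + g t) x (a + c).
Proof. exact (derivable_pt_lim_plus f g x a c). Qed.

Lemma derivable_pt_lim_cmul f c x l :
  derivable_pt_lim f x l -> derivable_pt_lim (fun t => c * f t) x (c * l).
Proof. exact (derivable_pt_lim_scal f c x l). Qed.

Lemma derivable_pt_lim_cmul2 f a c x l :
  derivable_pt_lim f x l -> derivable_pt_lim (fun t => a * f t * c) x (a * l * c).
Proof.
  intro H; eapply derivable_pt_lim_eq_deriv.
  - apply (derivable_pt_lim_ext (fun t => (a * c) * f t)); [intro; ring|].
    exact (derivable_pt_lim_scal f (a * c) x l H).
  - ring.
Qed.

Lemma derivable_pt_lim_comp_affine f a c d s l :
  derivable_pt_lim f (a + s * c - d) l ->
  derivable_pt_lim (fun r => f (a + r * c - d)) s (l * c).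
Proof.
  apply (derivable_pt_lim_comp (fun r => a + r * c - d) f s c l).
  eapply derivable_pt_lim_eq_deriv.
  - apply (derivable_pt_lim_minus _ (fun _ => d)); [|apply derivable_pt_lim_const].
    apply (derivable_pt_lim_plus (fun _ => a)); [apply derivable_pt_lim_const|].
    apply (derivable_pt_lim_ext (fun r => c * r)); [intro; ring|].
    apply (derivable_pt_lim_scal id), derivable_pt_lim_id.
  - ring.
Qed.

Lemma rsum_add n f g : rsum n (fun i => f i + g i) = rsum n f + rsum n g.
Proof. induction n as [|n IH]; simpl; [ring | rewrite IH; ring]. Qed.

Lemma rsum_scal n c f : rsum n (fun i => c * f i) = c * rsum n f.
Proof. induction n as [|n IH]; simpl; [ring | rewrite IH; ring]. Qed.

Lemma rsum_nonneg n f : (forall i, (i < n)%nat -> 0 <= f i) -> 0 <= rsum n f.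
Proof.
  induction n as [|n IH]; intro H; simpl; [lra|].
  apply Rplus_le_le_0_compat; [apply IH; intros; apply H | apply H]; lia.
Qed.

Lemma Rabs_rsum_le n f g :
  (forall i, (i < n)%nat -> Rabs (f i) <= g i) -> Rabs (rsum n f) <= rsum n g.
Proof.
  induction n as [|n IH]; intro H; simpl; [rewrite Rabs_R0; lra|].
  eapply Rle_trans; [apply Rabs_triang|].
  apply Rplus_le_compat; [apply IH; intros; apply H | apply H]; lia.
Qed.

Lemma rsum_derive n (F : nat -> R -> R) (D : nat -> R) s :
  (forall i, (i < n)%nat -> derivable_pt_lim (F i) s (D i)) ->
  derivable_pt_lim (fun r => rsum n (fun i => F i r)) s (rsum n D).
Proof.
  induction n as [|n IH]; intro H; simpl; [apply derivable_pt_lim_const|].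
  apply derivable_pt_lim_add; [apply IH; intros; apply H | apply H]; lia.
Qed.

Lemma sqr_le_rsum_sqr n w i : (i < n)%nat -> w i ^ 2 <= rsum n (fun j => w j ^ 2).
Proof.
  induction n as [|n IH]; intro Hi; [lia|]; cbn [rsum].
  pose proof (pow2_ge_0 (w n)).
  destruct (Nat.eq_dec i n) as [->|Hne].
  - assert (0 <= rsum n (fun j => w j ^ 2)) by (apply rsum_nonneg; intros; apply pow2_ge_0).
    lra.
  - assert (w i ^ 2 <= rsum n (fun j => w j ^ 2)) by (apply IH; lia). lra.
Qed.

Lemma Rabs_le_norm2 n w i : (i < n)%nat -> Rabs (w i) <= norm2 n w.
Proof.
  intro Hi; unfold norm2; rewrite <- sqrt_Rsqr_abs, Rsqr_pow2.
  apply sqrt_le_1_alt, sqr_le_rsum_sqr, Hi.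
Qed.

(* Inherits the convention [0^q = 0] of [rpow], also for [q = 0]. *)
Definition abspow (q t : R) : R := rpow (Rabs t) q.
Definition sgn (t : R) : R := if Rlt_dec t 0 then -1 else 1.
Definition sgnpow (q t : R) : R := sgn t * abspow q t.

Lemma abspow_nonneg q t : 0 <= abspow q t.
Proof. unfold abspow, rpow; destruct Rle_dec; [lra | left; apply Rpower_pos]. Qed.

Lemma abspow_0 q : abspow q 0 = 0.
Proof. unfold abspow, rpow; rewrite Rabs_R0; destruct Rle_dec; lra. Qed.

Lemma abspow_nz q t : t <> 0 -> abspow q t = Rpower (Rabs t) q.
Proof.
  intro Ht; unfold abspow, rpow; destruct Rle_dec as [H|]; [|reflexivity].
  pose proof (Rabs_pos_lt t Ht); lra.
Qed.

Lemma Rabs_sgn t : Rabs (sgn t) = 1.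
Proof. unfold sgn, Rabs; destruct Rlt_dec, Rcase_abs; lra. Qed.

Lemma sgn_sqr t : sgn t * sgn t = 1.
Proof. unfold sgn; destruct Rlt_dec; ring. Qed.

Lemma Rabs_sgnpow q t : Rabs (sgnpow q t) = abspow q t.
Proof.
  unfold sgnpow; rewrite Rabs_mult, Rabs_sgn, Rmult_1_l.
  apply Rabs_pos_eq, abspow_nonneg.
Qed.

Lemma sgn_near t z : t <> 0 -> t - Rabs t < z < t + Rabs t -> z <> 0 /\ sgn z = sgn t.
Proof.
  intros Ht Hz; unfold sgn.
  destruct (Rlt_dec t 0); [rewrite Rabs_left in Hz | rewrite Rabs_pos_eq in Hz];
    try lra; destruct (Rlt_dec z 0); split; lra.
Qed.

Lemma derivable_pt_lim_Rabs t : t <> 0 -> derivable_pt_lim Rabs t (sgn t).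
Proof.
  intro Ht; unfold sgn; destruct Rlt_dec.
  - exact (Rabs_derive_2 t r).
  - apply Rabs_derive_1; lra.
Qed.

(* [|f h / h| = |h|^(q-1)], which tends to 0 since [q > 1]. *)
Lemma derivable_pt_lim_0_abspow_bounded f q :
  1 < q -> (forall h, Rabs (f h) = abspow q h) -> derivable_pt_lim f 0 0.
Proof.
  intros Hq Hf eps Heps.
  exists (mkposreal _ (Rpower_pos eps (/ (q - 1)))); intros h Hh Hhd; simpl in Hhd.
  assert (Hf0 : f 0 = 0).
  { destruct (Req_dec (f 0) 0) as [|Hn]; [assumption|].
    exfalso; apply (Rabs_no_R0 _ Hn); rewrite Hf; apply abspow_0. }
  assert (Ha : 0 < Rabs h) by (apply Rabs_pos_lt; exact Hh).
  rewrite Rplus_0_l, Hf0, Rminus_0_r, Rminus_0_r.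
  unfold Rdiv; rewrite Rabs_mult, Rabs_inv, Hf, abspow_nz by exact Hh.
  replace q with ((q - 1) + 1) at 1 by ring.
  rewrite Rpower_plus, Rpower_1, Rmult_assoc, Rinv_r, Rmult_1_r by lra.
  replace eps with (Rpower (Rpower eps (/ (q - 1))) (q - 1)).
  - apply Rlt_Rpower_l; lra.
  - rewrite Rpower_mult, Rinv_l, Rpower_1 by lra; reflexivity.
Qed.

Lemma abspow_derive q t :
  t <> 0 \/ 1 < q -> derivable_pt_lim (abspow q) t (q * sgnpow (q - 1) t).
Proof.
  intros Hq; destruct (Req_dec t 0) as [->|Ht].
  - destruct Hq as [|Hq]; [lra|].
    unfold sgnpow; rewrite abspow_0, !Rmult_0_r.
    apply (derivable_pt_lim_0_abspow_bounded _ q Hq); intro h.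
    apply Rabs_pos_eq, abspow_nonneg.
  - pose proof (Rabs_pos_lt t Ht).
    apply (derivable_pt_lim_locally_ext (fun s => Rpower (Rabs s) q) _ t
             (t - Rabs t) (t + Rabs t)); [lra | |].
    + intros z Hz; destruct (sgn_near t z Ht Hz) as [Hz0 _].
      symmetry; apply abspow_nz, Hz0.
    + unfold sgnpow; rewrite abspow_nz by exact Ht.
      replace (q * (sgn t * Rpower (Rabs t) (q - 1)))
        with (q * Rpower (Rabs t) (q - 1) * sgn t) by ring.
      apply (derivable_pt_lim_comp Rabs (fun s => Rpower s q)).
      * apply derivable_pt_lim_Rabs, Ht.
      * apply derivable_pt_lim_power; lra.
Qed.

Lemma sgnpow_derive q t :
  t <> 0 \/ 1 < q -> derivable_pt_lim (sgnpow q) t (q * abspow (q - 1) t).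
Proof.
  intros Hq; destruct (Req_dec t 0) as [->|Ht].
  - destruct Hq as [|Hq]; [lra|].
    rewrite abspow_0, Rmult_0_r.
    exact (derivable_pt_lim_0_abspow_bounded _ q Hq (Rabs_sgnpow q)).
  - pose proof (Rabs_pos_lt t Ht).
    apply (derivable_pt_lim_locally_ext (fun s => sgn t * Rpower (Rabs s) q) _ t
             (t - Rabs t) (t + Rabs t)); [lra | |].
    + intros z Hz; destruct (sgn_near t z Ht Hz) as [Hz0 Hsg].
      unfold sgnpow; rewrite Hsg, abspow_nz by exact Hz0; reflexivity.
    + rewrite abspow_nz by exact Ht.
      replace (q * Rpower (Rabs t) (q - 1))
        with (sgn t * (q * Rpower (Rabs t) (q - 1) * sgn t))
        by (rewrite <- Rmult_assoc, (Rmult_comm (sgn t)), Rmult_assoc, sgn_sqr; ring).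
      apply derivable_pt_lim_scal.
      apply (derivable_pt_lim_comp Rabs (fun s => Rpower s q)).
      * apply derivable_pt_lim_Rabs, Ht.
      * apply derivable_pt_lim_power; lra.
Qed.

Definition hess_quad n p mu (b x u : nat -> R) : R :=
  rsum n (fun i => p * (p - 1) * abspow (p - 2) (x i - b i) * u i ^ 2)
  + mu * rsum n (fun i => 2 * u i ^ 2).

Definition third_quad n p (b x u w : nat -> R) : R :=
  rsum n (fun i => p * (p - 1) * (p - 2) * sgnpow (p - 3) (x i - b i) * w i * u i ^ 2).

Lemma hfun_abspow n p mu b y : hfun n p mu b y =
  fun x => rsum n (fun i => abspow p (x i - b i)) + mu * rsum n (fun i => (x i - y i) ^ 2).
Proof. reflexivity. Qed.

Lemma second_dir_hfun n p mu b y x u :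
  3 <= p -> second_dir (hfun n p mu b y) x u (hess_quad n p mu b x u).
Proof.
  intro Hp.
  exists (fun s => rsum n (fun i => p * sgnpow (p - 1) (x i + s * u i - b i) * u i)
           + mu * rsum n (fun i => 2 * (x i + s * u i - y i) * u i)); split.
  - exists 1; split; [lra|]; intros s _; rewrite hfun_abspow; unfold vadd_s.
    apply derivable_pt_lim_add; [|apply derivable_pt_lim_cmul];
      apply rsum_derive; intros i _; eapply derivable_pt_lim_eq_deriv.
    + apply (derivable_pt_lim_comp_affine (abspow p)), abspow_derive; lra.
    + ring.
    + apply (derivable_pt_lim_comp_affine (fun z => z ^ 2)), derivable_pt_lim_pow.
    + simpl; ring.
  - apply derivable_pt_lim_add; [|apply derivable_pt_lim_cmul];
      apply rsum_derive; intros i _; eapply derivable_pt_lim_eq_deriv.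
    + apply (derivable_pt_lim_cmul2 (fun s => sgnpow (p - 1) (x i + s * u i - b i))).
      apply (derivable_pt_lim_comp_affine (sgnpow (p - 1))), sgnpow_derive; lra.
    + replace (x i + 0 * u i - b i) with (x i - b i) by ring.
      replace (p - 1 - 1) with (p - 2) by ring; ring.
    + apply (derivable_pt_lim_cmul2 (fun s => x i + s * u i - y i)).
      apply (derivable_pt_lim_comp_affine id), derivable_pt_lim_id.
    + ring.
Qed.

Lemma third_dir_hfun n p mu b y x u w :
  3 <= p -> (3 < p \/ (forall i, (i < n)%nat -> x i <> b i)) ->
  third_dir (hfun n p mu b y) x u w (third_quad n p b x u w).
Proof.
  intros Hp Hx.
  exists (fun t => hess_quad n p mu b (vadd_s x t w) u); split.
  - exists 1; split; [lra|]; intros; apply second_dir_hfun, Hp.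
  - unfold hess_quad, vadd_s; rewrite <- (Rplus_0_r (third_quad _ _ _ _ _ _)).
    apply derivable_pt_lim_add; [|apply derivable_pt_lim_const].
    apply rsum_derive; intros i Hi; eapply derivable_pt_lim_eq_deriv.
    + apply (derivable_pt_lim_cmul2 (fun t => abspow (p - 2) (x i + t * w i - b i))).
      apply (derivable_pt_lim_comp_affine (abspow (p - 2))), abspow_derive.
      destruct Hx as [Hx|Hx]; [right; lra | left; specialize (Hx i Hi); lra].
    + replace (x i + 0 * w i - b i) with (x i - b i) by ring.
      replace (p - 2 - 1) with (p - 3) by ring; ring.
Qed.

Lemma poly_le_pow3 k : 0 <= k -> (k + 1) * (k + 2) <= 4 * Rpower 3 k.
Proof.
  intro Hk.
  assert (Hexp : exp k <= Rpower 3 k).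
  { replace (exp k) with (Rpower (exp 1) k) by (unfold Rpower; rewrite ln_exp, Rmult_1_r; reflexivity).
    apply Rle_Rpower_l; [lra | split; [apply exp_pos | apply exp_le_3]]. }
  assert (Hsq : (1 + k / 2) * (1 + k / 2) <= exp k).
  { replace (exp k) with (exp (k / 2) * exp (k / 2)) by (rewrite <- exp_plus; f_equal; field).
    pose proof (exp_ineq1_le (k / 2)); apply Rmult_le_compat; lra. }
  nra.
Qed.

Lemma scalar_bound_far p m r : 3 <= p -> 0 < m -> m <= 3 * r ->
  (p - 1) * (p - 2) * Rpower r (p - 3) <= 3 / m * (p * (p - 1) * Rpower r (p - 2)).
Proof.
  intros Hp Hm Hr.
  assert (Hpow : Rpower r (p - 2) = Rpower r (p - 3) * r).
  { replace (p - 2) with ((p - 3) + 1) by ring; rewrite Rpower_plus, Rpower_1 by lra; reflexivity. }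
  pose proof (Rpower_pos r (p - 3)).
  assert (1 <= 3 * r / m).
  { unfold Rdiv; rewrite <- (Rinv_r m) by lra.
    apply Rmult_le_compat_r; [left; apply Rinv_0_lt_compat|]; lra. }
  rewrite Hpow; apply Rle_trans with (p * (p - 1) * Rpower r (p - 3) * (3 * r / m)).
  - assert (0 <= p * (p - 1) * Rpower r (p - 3)) by (apply Rmult_le_pos; nra).
    assert ((p - 1) * (p - 2) <= p * (p - 1)) by nra.
    nra.
  - right; field; lra.
Qed.

Lemma scalar_bound_near p m r : 3 <= p -> 0 < r -> 3 * r <= m ->
  (p - 1) * (p - 2) * Rpower r (p - 3) <= 4 * Rpower m (p - 3).
Proof.
  intros Hp Hr Hrm.
  pose proof (poly_le_pow3 (p - 3) ltac:(lra)) as Hpoly.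
  pose proof (Rpower_pos r (p - 3)).
  apply Rle_trans with (4 * (Rpower 3 (p - 3) * Rpower r (p - 3))).
  - replace ((p - 1) * (p - 2)) with ((p - 3 + 1) * (p - 3 + 2)) by ring; nra.
  - rewrite Rpower_mult_distr by lra.
    apply Rmult_le_compat_l, Rle_Rpower_l; lra.
Qed.

Lemma scalar_bound p mu r : 3 <= p -> 0 < mu -> 0 <= r ->
  (p - 1) * (p - 2) * rpow r (p - 3)
  <= 3 * Rpower mu (- / (p - 2)) * (p * (p - 1) * rpow r (p - 2) + 2 * mu).
Proof.
  intros Hp Hmu Hr.
  set (m := Rpower mu (/ (p - 2))).
  assert (Hm : 0 < m) by apply Rpower_pos.
  assert (Hinv : Rpower mu (- / (p - 2)) = / m) by apply Rpower_Ropp.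
  assert (Hmu_m : Rpower m (p - 3) * m = mu).
  { rewrite <- (Rpower_1 m) at 2 by exact Hm; rewrite <- Rpower_plus; unfold m.
    rewrite Rpower_mult; replace (/ (p - 2) * (p - 3 + 1)) with 1 by (field; lra).
    apply Rpower_1, Hmu. }
  assert (Hmi : 0 < / m) by (apply Rinv_0_lt_compat, Hm).
  rewrite Hinv; unfold rpow.
  destruct (Rle_dec r 0); [nra|].
  assert (0 <= p * (p - 1) * Rpower r (p - 2))
    by (apply Rmult_le_pos; [nra | left; apply Rpower_pos]).
  assert (0 <= / m * mu) by nra.
  destruct (Rle_dec m (3 * r)).
  - pose proof (scalar_bound_far p m r Hp Hm ltac:(lra)); unfold Rdiv in *; nra.
  - pose proof (scalar_bound_near p m r Hp ltac:(lra) ltac:(lra)).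
    assert (Rpower m (p - 3) = mu * / m) by (rewrite <- Hmu_m; field; lra).
    nra.
Qed.

Lemma third_term_bound p mu a wi ui N : 3 <= p -> 0 < mu -> Rabs wi <= N ->
  Rabs (p * (p - 1) * (p - 2) * sgnpow (p - 3) a * wi * ui ^ 2)
  <= 3 * p * Rpower mu (- / (p - 2)) * N
       * (p * (p - 1) * abspow (p - 2) a * ui ^ 2 + mu * (2 * ui ^ 2)).
Proof.
  intros Hp Hmu Hw.
  pose proof (scalar_bound p mu (Rabs a) Hp Hmu (Rabs_pos a)) as Hs.
  fold (abspow (p - 3) a) (abspow (p - 2) a) in Hs.
  pose proof (abspow_nonneg (p - 3) a).
  pose proof (Rabs_pos wi).
  assert (Hpu : 0 <= p * ui ^ 2) by (pose proof (pow2_ge_0 ui); nra).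
  replace (p * (p - 1) * (p - 2) * sgnpow (p - 3) a * wi * ui ^ 2)
    with (p * ui ^ 2 * ((p - 1) * (p - 2)) * (sgnpow (p - 3) a * wi)) by ring.
  rewrite Rabs_mult, (Rabs_mult (sgnpow _ _)), Rabs_sgnpow, (Rabs_pos_eq (_ * _)) by nra.
  apply Rle_trans with (p * ui ^ 2 * N * ((p - 1) * (p - 2) * abspow (p - 3) a)).
  - replace (p * ui ^ 2 * N * ((p - 1) * (p - 2) * abspow (p - 3) a))
      with (p * ui ^ 2 * ((p - 1) * (p - 2)) * (abspow (p - 3) a * N)) by ring.
    apply Rmult_le_compat_l; [nra | apply Rmult_le_compat_l; lra].
  - replace (3 * p * Rpower mu (- / (p - 2)) * N
               * (p * (p - 1) * abspow (p - 2) a * ui ^ 2 + mu * (2 * ui ^ 2)))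
      with (p * ui ^ 2 * N * (3 * Rpower mu (- / (p - 2))
                              * (p * (p - 1) * abspow (p - 2) a + 2 * mu))) by ring.
    apply Rmult_le_compat_l; [apply Rmult_le_pos; lra | exact Hs].
Qed.

Theorem lemma10 :
  exists C : R, 0 < C /\
    forall (n : nat) (p mu : R) (b y x u w : nat -> R),
      3 <= p -> 0 < mu ->
      (3 < p \/ (forall i, (i < n)%nat -> x i <> b i)) ->
      exists l2 l3 : R,
        second_dir (hfun n p mu b y) x u l2 /\
        third_dir (hfun n p mu b y) x u w l3 /\
        Rabs l3 <= C * p * Rpower mu (- / (p - 2)) * norm2 n w * l2.
Proof.
  exists 3; split; [lra|].
  intros n p mu b y x u w Hp Hmu Hx.
  exists (hess_quad n p mu b x u), (third_quad n p b x u w).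
  split; [apply second_dir_hfun, Hp|].
  split; [apply third_dir_hfun; assumption|].
  unfold hess_quad, third_quad.
  rewrite <- rsum_scal, <- rsum_add, <- rsum_scal.
  apply Rabs_rsum_le; intros i Hi.
  apply third_term_bound; [exact Hp | exact Hmu | apply Rabs_le_norm2, Hi].
Qed.
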